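(* Let $\kappa$ be a regular uncountable cardinal with $\kappa^{<\kappa}=\kappa$ and $\gamma^\omega<\kappa$ for all $\gamma<\kappa$, and suppose $\kappa=\lambda^+$. Then the linear order $I$ described in the context is $(<\kappa,bs)$-stable.
   Context: $I^0$: order $\kappa\times\mathbb Q$ lexicographically; $I^0$ is the set of $f:\omega\to\kappa\times\mathbb Q$, $f(n)=(f_1(n),f_2(n))$, with $\{n\mid f_1(n)\ne0\}$ finite, ordered by comparing at the least $n$ where they differ. Construct linear orders $I^0\subseteq I^1\subseteq\dots$ ($i<\kappa$): given $I^i$, for each $\nu\in I^i$ add a new element $\nu^{i+1}$ with $\nu^{i+1}<\nu$ and, for all $\tau\in I^i\setminus\{\nu\}$, $\tau<\nu^{i+1}$ iff $\tau<\nu$ (for distinct $\nu,\mu$, $\nu^{i+1}<\mu^{i+1}$ iff $\nu<\mu$); $I^{i+1}=I^i\cup\{\nu^{i+1}\mid\nu\in I^i\}$; unions at limits; $I=\bigcup_{i<\kappa}I^i$. For a linear order $A$, $tp_{bs}(a,B,A)$ is the set of atomic and negated atomic formulas with parameters from $B$ satisfied by $a$; $A$ is $(<\kappa,bs)$-stable if for every $B\subseteq A$ with $|B|<\kappa$, $|\{tp_{bs}(a,B,A)\mid a\in A\}|<\kappa$. *)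

From mathcomp Require Import all_boot all_order all_algebra.
Set Implicit Arguments.
Unset Strict Implicit.

Definition inj_le (A B : Type) : Prop :=
  exists f : A -> B, forall x y, f x = f y -> x = y.
Definition card_lt (A B : Type) : Prop := inj_le A B /\ ~ inj_le B A.

(** * The cardinal kappa, presented as a well-ordered type (K, ltK)
    whose proper initial segments all have smaller cardinality, i.e.
    (K, ltK) is (isomorphic to) the initial ordinal kappa. *)
Section Kappa.
Variables (K : Type) (ltK : K -> K -> Prop).

Definition seg (a : K) : Type := {b : K | ltK b a}.

Definition strict_wellorder : Prop :=
  well_founded ltK /\
  (forall a b c, ltK a b -> ltK b c -> ltK a c) /\
  (forall a b, ltK a b \/ a = b \/ ltK b a).

Definition initial_ordinal : Prop := forall a, ~ inj_le K (seg a).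

Definition uncountable : Prop := ~ inj_le K nat.

Definition regular : Prop :=
  forall S : K -> Prop, card_lt {x | S x} K -> exists a, forall x, S x -> ltK x a.

(** kappa^{<kappa} = kappa : kappa^gamma <= kappa for every gamma < kappa
    (the cardinals < kappa are exactly the |seg a|) *)
Definition kappa_lt_kappa_eq : Prop := forall a, inj_le (seg a -> K) K.

Definition pow_omega_below : Prop := forall a, card_lt (nat -> seg a) K.

(** kappa = lambda^+ where lambda = |seg a| : every cardinal < kappa is <= lambda *)
Definition successor_cardinal : Prop :=
  exists a, forall b, inj_le (seg b) (seg a).

Definition ksucc (i j : K) : Prop :=
  ltK i j /\ forall k, ltK i k -> k = j \/ ltK j k.

Variable k0 : K.  (* the least element 0 of K *)

Definition I0 : Type :=
  {f : nat -> K * rat | exists N, forall n, N <= n -> fst (f n) = k0}.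

Definition lexKQ (x y : K * rat) : Prop :=
  ltK x.1 y.1 \/ (x.1 = y.1 /\ (x.2 < y.2)%R).

Definition ltI0 (f g : I0) : Prop :=
  exists n, (forall m, m < n -> sval f m = sval g m) /\ lexKQ (sval f n) (sval g n).

(** * The construction I^0 <= I^1 <= ... , I = \bigcup_{i<kappa} I^i.
    [stage i] is I^i (as a subset of I), [nw i nu] is nu^{i+1}. *)
Definition is_construction (I : Type) (ltI : I -> I -> Prop)
  (emb : I0 -> I) (stage : K -> I -> Prop) (nw : K -> I -> I) : Prop :=
  (forall x, ~ ltI x x) /\
  (forall x y z, ltI x y -> ltI y z -> ltI x z) /\
  (forall x y, ltI x y \/ x = y \/ ltI y x) /\
  (forall f g, emb f = emb g -> f = g) /\
  (forall f g, ltI (emb f) (emb g) <-> ltI0 f g) /\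
  (forall x, stage k0 x <-> exists f, x = emb f) /\
  (forall i nu, stage i nu ->
     ~ stage i (nw i nu) /\ ltI (nw i nu) nu /\
     (forall tau, stage i tau -> tau <> nu -> (ltI tau (nw i nu) <-> ltI tau nu))) /\
  (forall i nu mu, stage i nu -> stage i mu -> nu <> mu ->
     (ltI (nw i nu) (nw i mu) <-> ltI nu mu)) /\
  (forall i j, ksucc i j -> forall x,
     stage j x <-> (stage i x \/ exists nu, stage i nu /\ x = nw i nu)) /\
  (forall j, j <> k0 -> (forall i, ~ ksucc i j) -> forall x,
     stage j x <-> exists i, ltK i j /\ stage i x) /\
  (forall x, exists i, stage i x).

End Kappa.

Inductive term (P : Type) := tVar | tPar of P.
Inductive atom (P : Type) := aLt of term P & term P | aEq of term P & term P.
Inductive lit (P : Type) := lPos of atom P | lNeg of atom P.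
Arguments tVar {P}.

Section Types.
Variables (A : Type) (ltA : A -> A -> Prop) (B : A -> Prop).

Definition eval_term (a : A) (t : term {x | B x}) : A :=
  match t with tVar => a | tPar b => sval b end.

Definition sat_atom (a : A) (phi : atom {x | B x}) : Prop :=
  match phi with
  | aLt t1 t2 => ltA (eval_term a t1) (eval_term a t2)
  | aEq t1 t2 => eval_term a t1 = eval_term a t2
  end.

Definition sat_lit (a : A) (l : lit {x | B x}) : Prop :=
  match l with lPos phi => sat_atom a phi | lNeg phi => ~ sat_atom a phi end.

Definition tp_bs (a : A) : lit {x | B x} -> Prop := fun l => sat_lit a l.
End Types.

Definition lt_kappa_bs_stable (K A : Type) (ltA : A -> A -> Prop) : Prop :=
  forall B : A -> Prop, card_lt {x | B x} K ->
    card_lt {T : lit {x | B x} -> Prop | exists a : A, T = @tp_bs A ltA B a} K.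

(* Every x in I lies in the gap just below (or on) a least element of I^k above
   it, its ceiling at stage k; the ceiling at stage 0 is emb f for the root f of
   x.  Given B of size < kappa, regularity puts B inside a single stage I^i, and
   the roots of B form a set R of size < kappa.  If the root of x is not in R,
   the type of x over B is fixed by the cut its root makes in R, and fewer than
   kappa elements of I^0 outside R realise all such cuts: sequences whose entries
   all occur in R (there are at most (|R| * omega)^omega < kappa of them), or a
   prefix shared with R followed by one entry clamped above the first
   coordinates of R.  If the root of x is in R, x is either its ceiling w at
   stage i or has the type of w^{i+1} over B; and w is reached from its root by
   finitely many steps nu |-> nu^{j+1} with j < i, which leaves fewer than kappa
   choices. *)

From mathcomp Require Import all_boot all_order all_algebra.
From Stdlib Require Import Classical ClassicalEpsilon FunctionalExtensionality.
From Stdlib Require Import PropExtensionality ProofIrrelevance.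
From Stdlib Require List.
Import Order.TTheory.
Set Implicit Arguments.
Unset Strict Implicit.

Lemma sval_inj (X : Type) (P : X -> Prop) (u v : {x | P x}) : sval u = sval v -> u = v.
Proof. exact: eq_sig_hprop (fun x => @proof_irrelevance (P x)) u v. Qed.

Lemma inj_le_trans (X Y Z : Type) : inj_le X Y -> inj_le Y Z -> inj_le X Z.
Proof. by move=> [f f_inj] [g g_inj]; exists (fun x => g (f x)) => x y /g_inj /f_inj. Qed.

Lemma inj_le_of_rel (X Y : Type) (P : X -> Y -> Prop) :
  (forall x, exists y, P x y) -> (forall x x' y, P x y -> P x' y -> x = x') ->
  inj_le X Y.
Proof.
move=> total functional; have [f f_spec] := ClassicalEpsilon.choice _ total.
by exists f => x x' e; apply: (functional x x' (f x)); rewrite // e.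
Qed.

Lemma inj_le_of_surj (X Y : Type) (f : X -> Y) :
  (forall y, exists x, f x = y) -> inj_le Y X.
Proof. by move=> f_surj; apply: (inj_le_of_rel f_surj) => y y' x <- <-. Qed.

Lemma lift_seq (X : Type) (P : X -> Prop) (s : seq X) :
  (forall x, List.In x s -> P x) -> exists s' : seq {x | P x}, map sval s' = s.
Proof.
elim: s => [|x s IH] Ps; first by exists [::].
have [s' <-] := IH (fun y sy => Ps y (or_intror sy)).
by exists (exist _ x (Ps x (or_introl erefl)) :: s').
Qed.

Section LinearOrder.
Variables (A : Type) (ltA : A -> A -> Prop).
Hypothesis ltA_irr : forall x, ~ ltA x x.
Hypothesis ltA_trans : forall x y z, ltA x y -> ltA y z -> ltA x z.
Hypothesis ltA_total : forall x y, ltA x y \/ x = y \/ ltA y x.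

Definition same_cut (P : A -> Prop) x y := forall p, P p -> (ltA p x <-> ltA p y).

Lemma ltA_flip x y : x <> y -> (ltA x y <-> ~ ltA y x).
Proof.
move=> neq; split=> [xy yx | not_yx]; first exact: ltA_irr (ltA_trans xy yx).
by case: (ltA_total x y) => [// | [/neq | /not_yx]].
Qed.

Lemma tp_bs_same_cut (B : A -> Prop) x y : same_cut B x y -> ~ B x -> ~ B y ->
  tp_bs ltA (B := B) x = tp_bs ltA (B := B) y.
Proof.
move=> cut Bx By.
have [x_ne y_ne] : (forall b, B b -> x <> b) /\ (forall b, B b -> y <> b).
  by split=> b Bb e; [apply: Bx | apply: By]; rewrite e.
have above b : B b -> (ltA x b <-> ltA y b).
  by move=> Bb; rewrite (ltA_flip (x_ne b Bb)) (ltA_flip (y_ne b Bb)) (cut b Bb).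
have atomP (phi : atom {b | B b}) : sat_atom ltA x phi <-> sat_atom ltA y phi.
  case: phi => [t1 t2|t1 t2]; case: t1 => [|b]; case: t2 => [|b'] //=.
  - by split=> /ltA_irr [].
  - exact: above _ (svalP b').
  - exact: cut _ (svalP b).
  - by split=> [/(x_ne _ (svalP b')) | /(y_ne _ (svalP b'))].
  - by split=> [/esym/(x_ne _ (svalP b)) | /esym/(y_ne _ (svalP b))].
apply: functional_extensionality => l; apply: propositional_extensionality.
by case: l => phi; rewrite /tp_bs /=; have := atomP phi; tauto.
Qed.

End LinearOrder.

Section Kappa.
Variables (K : Type) (ltK : K -> K -> Prop) (k0 : K).
Hypothesis Hwo : strict_wellorder ltK.
Hypothesis Hcard : initial_ordinal ltK.
Hypothesis Hunc : uncountable K.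
Hypothesis Hreg : regular ltK.
Hypothesis Hom : pow_omega_below ltK.

Lemma ltK_irr a : ~ ltK a a.
Proof. by elim: (proj1 Hwo a) => {}a _ IH /[dup] aa; exact: IH. Qed.

Lemma ltK_trans a b c : ltK a b -> ltK b c -> ltK a c.
Proof. exact: (proj1 (proj2 Hwo)). Qed.

Lemma ltK_total a b : ltK a b \/ a = b \/ ltK b a.
Proof. exact: (proj2 (proj2 Hwo)). Qed.

Lemma ltK_asym a b : ltK a b -> ~ ltK b a.
Proof. by move=> ab ba; exact: ltK_irr (ltK_trans ab ba). Qed.

Definition leK a b := a = b \/ ltK a b.

Lemma seg_le a b : leK a b -> inj_le (seg ltK a) (seg ltK b).
Proof.
case=> [<-|ab]; first by exists id.
exists (fun x => exist _ (sval x) (ltK_trans (svalP x) ab)) => x y e.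
exact/sval_inj/(f_equal sval e).
Qed.

Definition small (X : Type) := card_lt X K.

Lemma small_le X Y : inj_le X Y -> small Y -> small X.
Proof.
move=> XY [YK KY]; split; first exact: inj_le_trans XY YK.
by move=> KX; apply: KY; exact: inj_le_trans KX XY.
Qed.

Lemma small_surj X Y (f : X -> Y) : (forall y, exists x, f x = y) -> small X -> small Y.
Proof. by move/inj_le_of_surj; exact: small_le. Qed.

Lemma seg_small a : small (seg ltK a).
Proof. by split; [exists sval; exact: sval_inj | exact: Hcard]. Qed.

Lemma small_bounded X (s : X -> K) : small X -> exists a, forall x, ltK (s x) a.
Proof.
move=> X_small.
have image_small : small {k | exists x, s x = k}.
  apply: (small_surj (f := fun x => exist _ (s x) (ex_intro _ x erefl))) X_small.
  by move=> [k [x sx]]; exists x; apply: sval_inj.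
have [a a_ub] := Hreg image_small.
by exists a => x; apply: a_ub; exists x.
Qed.

Lemma small_seg X : small X -> exists a, inj_le X (seg ltK a).
Proof.
move=> X_small; have [[g g_inj] _] := X_small.
have [a g_lt] := small_bounded g X_small.
exists a; exists (fun x => exist _ (g x) (g_lt x)) => x y /(f_equal sval); exact: g_inj.
Qed.

Lemma small_unit : small unit.
Proof.
split; first by exists (fun _ => k0); case; case.
move=> [f f_inj]; apply: Hunc; exists (fun _ => 0) => x y _.
by apply: f_inj; case: (f x); case: (f y).
Qed.

Lemma exists_gt a : exists b, ltK a b.
Proof.
by have [b ab] := small_bounded (fun _ : unit => a) small_unit; exists b; exact: ab.
Qed.

Lemma small_bool : small bool.
Proof.
have [k1 k01] := exists_gt k0.
split.
  exists (fun b : bool => if b then k1 else k0).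
  by case; case=> //= e; move: k01; rewrite e => /ltK_irr.
move=> [f f_inj]; apply: Hunc; exists (fun k => nat_of_bool (f k)) => x y e.
by apply: f_inj; move: e; case: (f x); case: (f y).
Qed.

Lemma small_seg2 X Y : small X -> small Y ->
  exists a, inj_le X (seg ltK a) /\ inj_le Y (seg ltK a).
Proof.
move=> /small_seg [a Xa] /small_seg [b Yb].
have [c ab_lt] := small_bounded (fun t : bool => if t then a else b) small_bool.
exists c; split.
  by apply: inj_le_trans Xa (seg_le _); right; exact: (ab_lt true).
by apply: inj_le_trans Yb (seg_le _); right; exact: (ab_lt false).
Qed.

Lemma small_fun X : small X -> small (nat -> X).
Proof.
move=> /small_seg [a [g g_inj]]; apply: small_le (Hom a).
exists (fun u n => g (u n)) => u v e; apply: functional_extensionality => n.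
exact/g_inj/(f_equal (fun w => w n) e).
Qed.

Lemma small_nat : small nat.
Proof.
apply: small_le (small_fun small_bool).
exists (fun n m => m == n) => n m /(f_equal (fun u => u n)).
by rewrite eqxx => /esym/eqP.
Qed.

Lemma small_prod X Y : small X -> small Y -> small (X * Y).
Proof.
move=> X_small Y_small; have [a [[f f_inj] [g g_inj]]] := small_seg2 X_small Y_small.
apply: small_le (Hom a).
exists (fun p n => if n is 0 then f p.1 else g p.2) => [[x y] [x' y']] e.
by rewrite (f_inj x x' (f_equal (fun u => u 0) e)) (g_inj y y' (f_equal (fun u => u 1) e)).
Qed.

Lemma small_sum X Y : small X -> small Y -> small (X + Y).
Proof.
move=> X_small Y_small; have [a [[f f_inj] [g g_inj]]] := small_seg2 X_small Y_small.
apply: small_le (small_prod small_bool (seg_small a)).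
exists (fun s => match s with inl x => (true, f x) | inr y => (false, g y) end).
by move=> [x|y] [x'|y'] [] // => [/f_inj|/g_inj] ->.
Qed.

Lemma small_option X : small X -> small (option X).
Proof.
move=> X_small; apply: small_le (small_sum X_small small_unit).
exists (fun o => if o is Some x then inl x else inr tt).
by move=> [x|] [y|] // [->].
Qed.

Lemma small_list X : small X -> small (seq X).
Proof.
move=> X_small; apply: small_le (small_fun (small_option X_small)).
exists (fun s => List.nth_error s) => s t e; apply: List.nth_error_ext => n.
exact: (f_equal (fun u => u n) e).
Qed.

Lemma small_rat : small rat.
Proof. by apply: small_le small_nat; exists pickle; exact: pcan_inj (@pickleK_inv rat). Qed.

Lemma lexKQ_irr v : ~ lexKQ ltK v v.
Proof. by case=> [/ltK_irr|[_]] //; rewrite ltxx. Qed.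

Definition agree (f g : I0 k0) n := forall m, m < n -> sval f m = sval g m.

Lemma agree_trans f g h n : agree f g n -> agree g h n -> agree f h n.
Proof. by move=> fg gh m mn; rewrite fg ?gh. Qed.

Lemma agree_sym f g n : agree f g n -> agree g f n.
Proof. by move=> fg m mn; rewrite fg. Qed.

Lemma ltI0_first_diff f g m : agree f g m -> sval f m <> sval g m ->
  (ltI0 ltK f g <-> lexKQ ltK (sval f m) (sval g m)).
Proof.
move=> fg fg_m; split=> [[n [fg_n lt_n]]|lt_m]; last by exists m.
case: (ltngtP n m) => [nm|mn|<-] //.
- by move: lt_n; rewrite fg // => /lexKQ_irr.
- by case: fg_m; exact: fg_n.
Qed.

Lemma first_diff f g N : ~ agree f g N ->
  exists m, [/\ m < N, agree f g m & sval f m <> sval g m].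
Proof.
elim: N => [|N IH] fg_N; first by case: fg_N => m; rewrite ltn0.
case: (classic (agree f g N)) => fg; last first.
  by have [m [mN fg_m neq_m]] := IH fg; exists m; split=> //; exact: ltnW.
exists N; split=> // e; apply: fg_N => m; rewrite ltnS leq_eqVlt.
by case/orP=> [/eqP -> | /fg].
Qed.

Lemma ltI0_congr r f f' m : agree r f m -> agree f f' m ->
  sval r m <> sval f m -> sval r m <> sval f' m ->
  (lexKQ ltK (sval r m) (sval f m) <-> lexKQ ltK (sval r m) (sval f' m)) ->
  (ltI0 ltK r f <-> ltI0 ltK r f').
Proof.
move=> rf ff' neq neq' lex.
by rewrite (ltI0_first_diff rf neq) (ltI0_first_diff (agree_trans rf ff') neq').
Qed.

Lemma patch_finite (s : seq (K * rat)) (v : K * rat) :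
  exists N, forall n, N <= n -> fst (nth (k0, 0%R) (rcons s v) n) = k0.
Proof. by exists (size (rcons s v)) => n sn; rewrite nth_default. Qed.

Definition patch s v : I0 k0 := exist _ _ (patch_finite s v).

Lemma agree_patch g n v : agree g (patch (mkseq (sval g) n) v) n.
Proof. by move=> m mn; rewrite /= nth_rcons size_mkseq mn nth_mkseq. Qed.

Lemma patch_last (g : I0 k0) n v : sval (patch (mkseq (sval g) n) v) n = v.
Proof. by rewrite /= nth_rcons size_mkseq ltnn eqxx. Qed.

(* Relative to a set whose first coordinates all lie below [beta], every value
   with first coordinate [>= beta] sits in the same cut as [(beta, 0)]. *)
Section Clamp.
Variable beta : K.

Definition clamp_code (v : K * rat) : option (seg ltK beta * rat) :=
  match excluded_middle_informative (ltK v.1 beta) with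
  | left v_lt => Some (exist _ v.1 v_lt, v.2)
  | right _ => None
  end.

Definition unclamp (c : option (seg ltK beta * rat)) : K * rat :=
  if c is Some p then (sval p.1, p.2) else (beta, 0%R).

Definition clamp v := unclamp (clamp_code v).

Lemma clamp_cut u v : ltK u.1 beta -> u <> v ->
  u <> clamp v /\ (lexKQ ltK u v <-> lexKQ ltK u (clamp v)).
Proof.
move=> u_lt neq; rewrite /clamp /clamp_code.
case: excluded_middle_informative => [v_lt|v_ge] /=; first by rewrite -surjective_pairing.
split=> [e|]; first by move: u_lt; rewrite e => /ltK_irr.
have uv : ltK u.1 v.1.
  case: (ltK_total v.1 beta) => [/v_ge // | [-> // | ]]; exact: ltK_trans.
by split=> _; left.
Qed.

Variable R : I0 k0 -> Prop.
Hypothesis R_below : forall r m, R r -> ltK (sval r m).1 beta.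

Lemma patch_cut f g n : agree g f n -> (forall r, R r -> ~ agree r f n.+1) ->
  let f' := patch (mkseq (sval g) n) (clamp (sval f n)) in
  ~ R f' /\ same_cut (ltI0 ltK (k0:=k0)) R f f'.
Proof.
move=> gf fresh f'.
have ff' : agree f f' n := agree_trans (agree_sym gf) (@agree_patch g n _).
have f'_n : sval f' n = clamp (sval f n) by exact: patch_last.
split=> [Rf' | r Rr].
  have f'_f : sval f' n = sval f n.
    apply: NNPP => neq; have [neq' _] := clamp_cut (R_below n Rf') neq; exact: neq' f'_n.
  apply: (fresh f' Rf') => m; rewrite ltnS leq_eqVlt.
  by case/orP=> [/eqP -> // | /(agree_sym ff')].
have [m [mn rf neq]] := first_diff (fresh r Rr).
have rf' := agree_trans rf (fun k km => ff' k (leq_trans km mn)).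
move: mn; rewrite ltnS leq_eqVlt => /orP [/eqP em | mn].
  subst m; have [neq' lex] := clamp_cut (R_below n Rr) neq.
  by apply: ltI0_congr rf _ neq _ _; rewrite ?f'_n.
by rewrite (ltI0_first_diff rf neq) (ltI0_first_diff rf' _) -ff'.
Qed.

End Clamp.

Definition witness (R : I0 k0 -> Prop) (og : option {g | R g}) : I0 k0 :=
  if og is Some g then sval g else patch [::] (k0, 0%R).

Lemma fresh_position (R : I0 k0 -> Prop) f N : (forall r, R r -> ~ agree r f N) ->
  exists n (og : option {g | R g}),
    (forall r, R r -> ~ agree r f n.+1) /\ agree (witness og) f n.
Proof.
elim: N => [|N IH] fresh.
  by exists 0, None; split=> [r Rr _ | m]; [apply: (fresh r Rr) => m |]; rewrite ltn0.
case: (classic (exists2 r, R r & agree r f N)) => [[r Rr rf] | none].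
  by exists N, (Some (exist _ r Rr)).
by apply: IH => r Rr rf; apply: none; exists r.
Qed.

Lemma I0_few_cuts (R : I0 k0 -> Prop) : small {f | R f} ->
  exists (C : Type) (d : C -> I0 k0), small C /\
  forall f, ~ R f -> exists c, ~ R (d c) /\ same_cut (ltI0 ltK (k0:=k0)) R f (d c).
Proof.
move=> R_small; have entries_small := small_prod R_small small_nat.
pose V v := exists p : {f | R f} * nat, sval (sval p.1) p.2 = v.
have V_small : small {v | V v}.
  apply: (small_surj (f := fun p => exist V _ (ex_intro _ p erefl))) entries_small.
  by move=> [v [p pv]]; exists p; apply: sval_inj.
have [beta entries_below] :=
  small_bounded (fun p : {f | R f} * nat => (sval (sval p.1) p.2).1) entries_small.
have R_below r m : R r -> ltK (sval r m).1 beta.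
  by move=> Rr; exact: (entries_below (exist _ r Rr, m)).
pose C := ({f : I0 k0 | forall n, V (sval f n)} +
           option {g | R g} * nat * option (seg ltK beta * rat))%type.
pose d (c : C) := match c with
  | inl f => sval f
  | inr (og, n, code) => patch (mkseq (sval (witness og)) n) (unclamp code)
  end.
exists C, d; split.
  apply: small_sum.
    apply: small_le (small_fun V_small).
    exists (fun (f : {f : I0 k0 | forall n, V (sval f n)}) n => exist V _ (svalP f n)).
    move=> f g e; apply/sval_inj/sval_inj.
    by apply: functional_extensionality => n; exact: (f_equal sval (f_equal (fun u => u n) e)).
  apply: small_prod (small_option (small_prod (seg_small _) small_rat)).
  exact: small_prod (small_option R_small) small_nat.
move=> f notRf.
case: (classic (forall n, exists2 r, R r & agree r f n.+1)) => [shared | not_shared].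
  have V_f n : V (sval f n).
    by have [r Rr rf] := shared n; exists (exist _ r Rr, n); exact: rf.
  by exists (inl (exist _ f V_f)).
have [N fresh_N] : exists N, forall r, R r -> ~ agree r f N.
  apply: NNPP => none; apply: not_shared => n; apply: NNPP => fresh.
  by apply: none; exists n.+1 => r Rr rf; apply: fresh; exists r.
have [n [og [fresh og_f]]] := fresh_position fresh_N.
have [notRf' cut] := patch_cut R_below og_f fresh.
by exists (inr (og, n, clamp_code beta (sval f n))).
Qed.

Section Construction.
Hypothesis k0_least : forall k, k = k0 \/ ltK k0 k.
Variables (I : Type) (ltI : I -> I -> Prop) (emb : I0 k0 -> I).
Variables (stage : K -> I -> Prop) (nw : K -> I -> I).
Hypothesis ltI_irr : forall x, ~ ltI x x.
Hypothesis ltI_trans : forall x y z, ltI x y -> ltI y z -> ltI x z.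
Hypothesis ltI_total : forall x y, ltI x y \/ x = y \/ ltI y x.
Hypothesis emb_inj : forall f g, emb f = emb g -> f = g.
Hypothesis ltI_emb : forall f g, ltI (emb f) (emb g) <-> ltI0 ltK f g.
Hypothesis stage0P : forall x, stage k0 x <-> exists f, x = emb f.
Hypothesis nwP : forall i nu, stage i nu ->
  ~ stage i (nw i nu) /\ ltI (nw i nu) nu /\
  (forall tau, stage i tau -> tau <> nu -> (ltI tau (nw i nu) <-> ltI tau nu)).
Hypothesis stage_succP : forall i j, ksucc ltK i j -> forall x,
  stage j x <-> (stage i x \/ exists nu, stage i nu /\ x = nw i nu).
Hypothesis stage_limP : forall j, j <> k0 -> (forall i, ~ ksucc ltK i j) -> forall x,
  stage j x <-> exists i, ltK i j /\ stage i x.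
Hypothesis stage_exists : forall x, exists i, stage i x.

Lemma k0_le k : leK k0 k.
Proof. by case: (k0_least k) => [->|]; [left | right]. Qed.

Lemma not_lt_k0 k : ~ ltK k k0.
Proof. by case: (k0_le k) => [-> /ltK_irr | /ltK_asym]. Qed.

Lemma succ_le i j k : ksucc ltK i j -> ltK k j -> leK k i.
Proof.
move=> [ij next] kj; case: (ltK_total k i) => [ki | [-> | ik]]; [by right | by left |].
by case: (next k ik) => [e | /(ltK_asym kj) //]; move: kj; rewrite e => /ltK_irr.
Qed.

Lemma stage_step j x : j <> k0 -> stage j x ->
  (exists2 i, ltK i j & stage i x) \/
  (exists i nu, [/\ ksucc ltK i j, stage i nu & x = nw i nu]).
Proof.
move=> j_ne x_j; case: (classic (exists i, ksucc ltK i j)) => [[i ij] | not_succ].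
  case/(stage_succP ij): x_j => [x_i | [nu [nu_i ->]]]; last by right; exists i, nu.
  by left; exists i => //; case: ij.
left; have not_succ' i : ~ ksucc ltK i j by move=> ij; apply: not_succ; exists i.
by have [i [ij x_i]] := (stage_limP j_ne not_succ' x).1 x_j; exists i.
Qed.

Lemma stage_mono i j x : ltK i j -> stage i x -> stage j x.
Proof.
move: i; elim: (proj1 Hwo j) => {}j _ IH i ij x_i.
case: (classic (exists i', ksucc ltK i' j)) => [[i' i'j] | not_succ].
  apply/(stage_succP i'j); left.
  by case: (succ_le i'j ij) => [<- // | ii']; exact: IH (proj1 i'j) _ ii' x_i.
have j_ne : j <> k0 by move=> e; move: ij; rewrite e => /not_lt_k0.
have not_succ' i' : ~ ksucc ltK i' j by move=> i'j; apply: not_succ; exists i'.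
by apply/(stage_limP j_ne not_succ'); exists i.
Qed.

Lemma stage_le i j x : leK i j -> stage i x -> stage j x.
Proof. by case=> [<- // | ij]; exact: stage_mono. Qed.

Lemma stage_bound (B : I -> Prop) : small {x | B x} -> exists i, forall b, B b -> stage i b.
Proof.
move=> B_small.
have [s s_stage] := ClassicalEpsilon.choice _ (fun b : {x | B x} => stage_exists (sval b)).
have [i s_lt] := small_bounded s B_small.
by exists i => b Bb; exact: stage_mono (s_lt (exist _ b Bb)) (s_stage (exist _ b Bb)).
Qed.

Definition ceil k x w :=
  [/\ stage k w, x = w \/ ltI x w & forall t, stage k t -> ltI t w -> ltI t x].

Lemma ceil_self k x : stage k x -> ceil k x x.
Proof. by move=> x_k; split=> //; left. Qed.

Lemma ceil_cmp k x y w u : ceil k x w -> ceil k y u -> ltI w u -> ltI x y.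
Proof.
move=> [w_k x_w _] [_ _ below_u] wu; have wy := below_u w w_k wu.
by case: x_w => [-> // | xw]; exact: ltI_trans xw wy.
Qed.

Lemma ceil_unique k x w u : ceil k x w -> ceil k x u -> w = u.
Proof.
move=> xw xu; case: (ltI_total w u) => [wu | [// | uw]].
  by case: (ltI_irr (ceil_cmp xw xu wu)).
by case: (ltI_irr (ceil_cmp xu xw uw)).
Qed.

Lemma ceil_trans k i x w u : leK k i -> ceil i x w -> ceil k w u -> ceil k x u.
Proof.
move=> ki [_ x_w below_w] [u_k w_u below_u]; split=> // [|t t_k tu].
  case: x_w => [-> // | xw]; right; case: w_u => [<- // | ]; exact: ltI_trans xw.
exact: below_w (stage_le ki t_k) (below_u t t_k tu).
Qed.

Lemma ceil_nw k i nu w : leK k i -> stage i nu -> ceil k nu w -> ceil k (nw i nu) w.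
Proof.
move=> ki nu_i [w_k nu_w below_w]; have [_ [nw_lt nw_gap]] := nwP nu_i.
split=> // [|t t_k tw].
  by right; case: nu_w => [<- // | ]; exact: ltI_trans nw_lt.
have t_nu := below_w t t_k tw.
have t_ne : t <> nu by move=> e; move: t_nu; rewrite e => /ltI_irr.
exact/(nw_gap t (stage_le ki t_k) t_ne).
Qed.

Lemma ceil_exists k x : exists w, ceil k x w.
Proof.
have [j x_j] := stage_exists x.
move: x x_j; elim: (proj1 Hwo j) => {}j _ IH x x_j.
case: (ltK_total j k) => [jk | [<- | kj]]; first by exists x; exact/ceil_self/(stage_mono jk).
  by exists x; exact: ceil_self.
have j_ne : j <> k0 by move=> e; move: kj; rewrite e => /not_lt_k0.
case: (stage_step j_ne x_j) => [[i ij x_i] | [i [nu [ij nu_i ->]]]]; first exact: IH ij x x_i.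
have [w nu_w] := IH i (proj1 ij) nu nu_i.
by exists w; apply: ceil_nw nu_i nu_w; exact: succ_le ij kj.
Qed.

Lemma root_exists x : exists f, ceil k0 x (emb f).
Proof.
have [w x_w] := ceil_exists k0 x; have [w_0 _ _] := x_w.
by have [f e] := (stage0P w).1 w_0; exists f; rewrite -e.
Qed.

Lemma root_lt x b f g : ceil k0 x (emb f) -> ceil k0 b (emb g) -> f <> g ->
  (ltI b x <-> ltI0 ltK g f).
Proof.
move=> x_f b_g fg; split=> [bx | /ltI_emb gf]; last exact: ceil_cmp b_g x_f gf.
apply/ltI_emb; case: (ltI_total (emb g) (emb f)) => [// | [/emb_inj e | fg']].
  by case: fg.
by case: (ltI_irr (ltI_trans bx (ceil_cmp x_f b_g fg'))).
Qed.

Definition decode g (p : seq K) := foldl (fun y s => nw s y) (emb g) p.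

Lemma stage_decode j y : stage j y -> exists g p,
  [/\ forall s, List.In s p -> ltK s j, y = decode g p & ceil k0 y (emb g)].
Proof.
move: y; elim: (proj1 Hwo j) => {}j _ IH y y_j.
case: (classic (j = k0)) => [j0 | j_ne].
  move: y_j; rewrite j0 => /stage0P [g ->].
  by exists g, [::]; split=> //; apply/ceil_self/stage0P; exists g.
case: (stage_step j_ne y_j) => [[i ij y_i] | [i [nu [[ij _] nu_i ->]]]].
  have [g [p [p_lt -> y_g]]] := IH i ij y y_i.
  by exists g, p; split=> // s /p_lt si; exact: ltK_trans si ij.
have [g [p [p_lt nu_e nu_g]]] := IH i ij nu nu_i; subst nu.
exists g, (rcons p i); split; last exact: ceil_nw (k0_le i) nu_i nu_g.
  move=> s; rewrite -cats1 List.in_app_iff => -[/p_lt si | [<- // | []]].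
  exact: ltK_trans si ij.
by rewrite /decode foldl_rcons.
Qed.

Section Types.
Variable B : I -> Prop.

Definition roots f := exists2 b, B b & ceil k0 b (emb f).

Lemma small_roots : small {x | B x} -> small {f | roots f}.
Proof.
apply: small_le; apply: (inj_le_of_rel (P := fun f b => ceil k0 (sval b) (emb (sval f)))).
  by move=> [f [b Bb b_f]]; exists (exist _ b Bb).
by move=> f f' b b_f b_f'; apply/sval_inj/emb_inj; exact: ceil_unique b_f b_f'.
Qed.

Lemma tp_root_cut x y f f' : ceil k0 x (emb f) -> ceil k0 y (emb f') ->
  ~ roots f -> ~ roots f' -> same_cut (ltI0 ltK (k0:=k0)) roots f f' ->
  tp_bs ltI (B := B) x = tp_bs ltI (B := B) y.
Proof.
move=> x_f y_f' notRf notRf' cut.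
apply: (tp_bs_same_cut ltI_irr ltI_trans ltI_total) => [b Bb | Bx | By].
- have [g b_g] := root_exists b; have Rg : roots g by exists b.
  have ne h : ~ roots h -> h <> g by move=> notRh e; apply: notRh; rewrite e.
  by rewrite (root_lt x_f b_g (ne f notRf)) (root_lt y_f' b_g (ne f' notRf')); exact: cut.
- by apply: notRf; exists x.
- by apply: notRf'; exists y.
Qed.

Variable i : K.
Hypothesis B_stage : forall b, B b -> stage i b.

Lemma tp_gap x w : ceil i x w -> x <> w ->
  tp_bs ltI (B := B) x = tp_bs ltI (B := B) (nw i w).
Proof.
move=> [w_i x_w below_w] x_ne; have [nw_new [nw_lt nw_gap]] := nwP w_i.
have xw : ltI x w by case: x_w.
apply: (tp_bs_same_cut ltI_irr ltI_trans ltI_total) => [b Bb | /B_stage x_i | /B_stage //].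
  have b_i := B_stage Bb; split=> [bx | b_nw].
    have bw := ltI_trans bx xw.
    have b_ne : b <> w by move=> e; move: bw; rewrite e => /ltI_irr.
    exact/(nw_gap b b_i b_ne).
  have b_ne : b <> w by move=> e; move: b_nw; rewrite e => /(ltI_trans nw_lt) /ltI_irr.
  exact: below_w b b_i ((nw_gap b b_i b_ne).1 b_nw).
exact: ltI_irr (below_w x x_i xw).
Qed.

End Types.

Lemma construction_bs_stable : lt_kappa_bs_stable K ltI.
Proof.
move=> B B_small.
have [i B_stage] := stage_bound B_small.
have [C0 [d0 [C0_small d0_cut]]] := I0_few_cuts (small_roots B_small).
pose C := (C0 + {f | roots B f} * seq (seg ltK i) * bool)%type.
pose dec (c : C) := match c with
  | inl c0 => emb (d0 c0)
  | inr (f, q, gap) => let w := decode (sval f) (map sval q) in if gap then nw i w else w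
  end.
have C_small : small C.
  apply: small_sum C0_small (small_prod _ small_bool).
  exact: small_prod (small_roots B_small) (small_list (seg_small i)).
have dec_onto x : exists c, tp_bs ltI (B := B) x = tp_bs ltI (B := B) (dec c).
  have [f x_f] := root_exists x.
  case: (classic (roots B f)) => [Rf | notRf]; last first.
    have [c [notRc cut]] := d0_cut f notRf; exists (inl c).
    apply: tp_root_cut x_f _ notRf notRc cut; apply/ceil_self/stage0P; by exists (d0 c).
  have [w x_w] := ceil_exists i x.
  have [w_i _ _] := x_w; have [g [p [p_lt w_e w_g]]] := stage_decode w_i.
  have gf : g = f by apply/emb_inj/(ceil_unique (ceil_trans (k0_le i) x_w w_g) x_f).
  subst g; have [q q_e] := lift_seq p_lt.
  case: (classic (x = w)) => [x_e | x_ne].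
    by exists (inr (exist _ f Rf, q, false)); rewrite /= q_e -w_e x_e.
  exists (inr (exist _ f Rf, q, true)); rewrite /= q_e -w_e; exact: tp_gap x_w x_ne.
apply: (small_surj
  (f := fun c => exist _ (tp_bs ltI (dec c)) (ex_intro _ (dec c) erefl))) C_small.
by move=> [T [x T_e]]; have [c e] := dec_onto x; exists c; apply: sval_inj; rewrite /= T_e e.
Qed.

End Construction.

End Kappa.

Unset Implicit Arguments.
Set Strict Implicit.

Theorem mainTheorem15 (K : Type) (ltK : K -> K -> Prop) (k0 : K)
  (Hwo : strict_wellorder ltK)
  (Hk0 : forall k, k = k0 \/ ltK k0 k)
  (Hcard : initial_ordinal ltK)
  (Hunc : uncountable K)
  (Hreg : regular ltK)
  (Hkk : kappa_lt_kappa_eq ltK)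
  (Hom : pow_omega_below ltK)
  (Hsucc : successor_cardinal ltK)
  (I : Type) (ltI : I -> I -> Prop) (emb : @I0 K k0 -> I)
  (stage : K -> I -> Prop) (nw : K -> I -> I)
  (HI : @is_construction K ltK k0 I ltI emb stage nw) :
  @lt_kappa_bs_stable K I ltI.
Proof.
have [irr [trans [total [inj [lt_emb [st0 [nwP [_ [succ [lim ex]]]]]]]]]] := HI.
exact: (construction_bs_stable Hwo Hcard Hunc Hreg Hom Hk0
  irr trans total inj lt_emb st0 nwP succ lim ex).
Qed.
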